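(* Let $n\in\mathbb{N}$ and let $(X_1,\dots,X_n)$ be a random vector with joint distribution function $F_{(X_1,\dots,X_n)}$ and marginal distribution functions $F_i=F_{X_i}$, $i=1,\dots,n$. Let $C_F$ be a copula such that $F_{(X_1,\dots,X_n)}(x_1,\dots,x_n)=C_F(F_1(x_1),\dots,F_n(x_n))$ for all $(x_1,\dots,x_n)\in\mathbb{R}^n$. Let $(\alpha_1,\dots,\alpha_n)\in(0,1)^n$ satisfy $F_i^{\wedge}(\alpha_i)<F_i^{\vee}(\alpha_i)$ for all $i\in\{1,\dots,n\}$. Then \[C_F(\alpha_1,\dots,\alpha_n)=F_{(X_1,\dots,X_n)}\big(F_1^{\wedge}(\alpha_1),\dots,F_n^{\wedge}(\alpha_n)\big).\]
   Context: A copula is an $n$-variate distribution function on $[0,1]^n$ with uniform $U(0,1)$ marginals. For a univariate distribution function $G$ and $\alpha\in(0,1)$: $G^{\wedge}(\alpha)=\inf\{x:G(x)\ge\alpha\}$ (left $\alpha$-quantile) and $G^{\vee}(\alpha)=\inf\{x:G(x)>\alpha\}$ (right $\alpha$-quantile). *)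

From HB Require Import structures.
From mathcomp Require Import all_boot all_order all_algebra.
From mathcomp Require Import all_classical all_reals all_analysis.
Set Implicit Arguments. Unset Strict Implicit. Unset Printing Implicit Defensive.
Import Order.TTheory GRing.Theory Num.Theory.
Local Open Scope classical_set_scope.
Local Open Scope ring_scope.

Definition lquantile (R : realType) (G : R -> R) (a : R) : R :=
  inf [set x : R | a <= G x].

Definition rquantile (R : realType) (G : R -> R) (a : R) : R :=
  inf [set x : R | a < G x].

Definition jointdf (R : realType) d (T : measurableType d)
  (P : probability T R) n (X : 'I_n -> {RV P >-> R}) (x : 'I_n -> R) : R :=
  fine (P [set w | forall i, X i w <= x i]).

Definition margdf (R : realType) d (T : measurableType d)
  (P : probability T R) (Y : {RV P >-> R}) (t : R) : R :=
  fine (P [set w | Y w <= t]).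

Definition copula (R : realType) n (C : ('I_n -> R) -> R) : Prop :=
  exists (d : measure_display) (T : measurableType d) (P : probability T R)
         (U : 'I_n -> {RV P >-> R}),
    (forall i t, 0 <= t <= 1 -> margdf (U i) t = t) /\
    (forall u : 'I_n -> R, (forall i, 0 <= u i <= 1) -> C u = jointdf U u).

From HB Require Import structures.
From mathcomp Require Import all_boot all_order all_algebra.
From mathcomp Require Import all_classical all_reals all_analysis.
Import Order.TTheory GRing.Theory Num.Theory.
Import numFieldNormedType.Exports.
Local Open Scope classical_set_scope.
Local Open Scope ring_scope.

(* Right continuity makes the infimum defining F^wedge(alpha) attained, so
   F(F^wedge(alpha)) >= alpha, while every point strictly between
   F^wedge(alpha) and F^vee(alpha) has F <= alpha; by monotonicity
   F(F^wedge(alpha)) = alpha.  The identity is then the Sklar representation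
   evaluated at the left quantiles. *)

Section quantile_of_distribution_function.
Variables (R : realType) (G : R -> R).
Hypothesis G_nondecreasing : {homo G : x y / x <= y}.
Hypothesis G_right_continuous : forall q : R, G r @[r --> q^'+] --> G q.
Hypothesis G_cvgy1 : G x @[x --> +oo] --> (1 : R).
Hypothesis G_cvgNy0 : G x @[x --> -oo] --> (0 : R).
Variable a : R.
Hypotheses (a_gt0 : 0 < a) (a_lt1 : a < 1).

Lemma lbound_level_set : exists M, lbound [set x | a <= G x] M.
Proof.
have [M [_ GM]] := cvgr_lt 0 G_cvgNy0 a a_gt0.
exists (M - 1) => x /= aGx; rewrite leNgt; apply/negP => xM.
have xltM : x < M by rewrite (lt_le_trans xM) // lerBlDr lerDl.
by have := GM x xltM; rewrite ltNge aGx.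
Qed.

Lemma has_inf_level_set : has_inf [set x | a <= G x].
Proof.
have [M [_ GM]] := cvgr_gt 1 G_cvgy1 a a_lt1.
split; last exact: lbound_level_set.
by exists (M + 1); apply/ltW/GM; rewrite ltrDl.
Qed.

Lemma le_df_lquantile : a <= G (lquantile G a).
Proof.
set q := lquantile G a.
rewrite leNgt; apply/negP => Gqa.
have [e /= e_gt0 Ge] := cvgr_lt _ (G_right_continuous q) a Gqa.
have [x /= aGx xqe] := inf_adherent e_gt0 has_inf_level_set.
have qx : q <= x by apply: ge_inf aGx; exact: lbound_level_set.
have [xq | xNq] := eqVneq x q.
  by move: aGx; rewrite xq leNgt Gqa.
have {qx xNq} qltx : q < x by rewrite lt_neqAle eq_sym xNq.
have : G x < a.
  apply: (Ge _ _ qltx); rewrite /ball_ /= distrC ger0_norm ?subr_ge0 ?ltW //.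
  by rewrite ltrBlDr addrC.
by rewrite ltNge aGx.
Qed.

Lemma df_le_lt_rquantile x : x < rquantile G a -> G x <= a.
Proof.
move=> xr; rewrite leNgt; apply/negP => aGx.
have [M LM] := lbound_level_set.
have Mlb : lbound [set y | a < G y] M by move=> y /ltW; exact: LM.
by have := ge_inf (ex_intro _ _ Mlb) aGx; rewrite -/(rquantile G a) leNgt xr.
Qed.

Lemma df_lquantile : lquantile G a < rquantile G a -> G (lquantile G a) = a.
Proof.
move=> qr; apply/eqP; rewrite eq_le le_df_lquantile andbT.
have [qm mr] := midf_lt qr.
exact: le_trans (G_nondecreasing _ _ (ltW qm)) (df_le_lt_rquantile _ mr).
Qed.

End quantile_of_distribution_function.

Section marginal_distribution_function.
Variables (R : realType) (d : measure_display) (T : measurableType d).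
Variables (P : probability T R) (Y : {RV P >-> R}).

Lemma margdf_cdf : margdf Y = fine \o cdf Y.
Proof.
apply/funext => t; rewrite /margdf /cdf /distribution /pushforward /=.
by congr (fine (P _)); apply/seteqP; split => w /=; rewrite in_itv.
Qed.

Lemma margdf_nondecreasing : {homo margdf Y : x y / x <= y}.
Proof.
move=> x y xy; rewrite margdf_cdf /= fine_le ?fin_num_measure //.
exact: cdf_nondecreasing.
Qed.

Lemma margdf_right_continuous q : margdf Y r @[r --> q^'+] --> margdf Y q.
Proof.
rewrite margdf_cdf; have := @cdf_right_continuous _ _ _ P Y q.
by rewrite -[cdf Y q]fineK ?fin_num_measure //; exact: fine_cvg.
Qed.

Lemma margdf_cvgy1 : margdf Y x @[x --> +oo] --> (1 : R).
Proof. by rewrite margdf_cdf; exact: fine_cvg (cvg_cdfy1 Y). Qed.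

Lemma margdf_cvgNy0 : margdf Y x @[x --> -oo] --> (0 : R).
Proof. by rewrite margdf_cdf; exact: fine_cvg (cvg_cdfNy0 Y). Qed.

End marginal_distribution_function.

Theorem mainTheorem10 (R : realType) (d : measure_display) (T : measurableType d)
  (P : probability T R) (n : nat) (X : 'I_n -> {RV P >-> R})
  (C : ('I_n -> R) -> R) :
  copula C ->
  (forall x : 'I_n -> R, jointdf X x = C (fun i => margdf (X i) (x i))) ->
  forall alpha : 'I_n -> R,
    (forall i, 0 < alpha i < 1) ->
    (forall i, lquantile (margdf (X i)) (alpha i) <
               rquantile (margdf (X i)) (alpha i)) ->
    C alpha = jointdf X (fun i => lquantile (margdf (X i)) (alpha i)).
Proof.
move=> _ sklar alpha alpha01 quantile_gap; rewrite sklar; congr C.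
apply/funext => i /=; have /andP[a_gt0 a_lt1] := alpha01 i.
rewrite df_lquantile //.
- exact: margdf_nondecreasing.
- exact: margdf_right_continuous.
- exact: margdf_cvgy1.
- exact: margdf_cvgNy0.
Qed.
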